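(* Let $\tau>0$, let $u_\tau:\mathbb{R}^d\to\mathbb{R}$ be a ($\mathbb{Z}^d$-periodic, continuous) solution of the discrete Lax--Oleinik equation \[ u_\tau(y)+\bar L(\tau)\,\tau=\inf_{x\in\mathbb{R}^d}\bigl(u_\tau(x)+\mathcal L_\tau(x,y)\bigr)\qquad\forall y, \] and let $\{x_n\}_{n\le 0}$ be a calibrated backward configuration for $u_\tau$. Define the discrete velocities $v_n:=\frac{x_{n+1}-x_n}{\tau}$. Then there exists a constant $D>0$, depending only on the Lagrangian $L$, such that $|v_n|\le D$ for all $n\le -1$.
   Context: $\mathbb{T}^d=\mathbb{R}^d/\mathbb{Z}^d$; functions on $\mathbb{T}^d$ are identified with $\mathbb{Z}^d$-periodic functions on $\mathbb{R}^d$. $H:\mathbb{T}^d\times\mathbb{R}^d\to\mathbb{R}$ is a Tonelli Hamiltonian: $H\in C^2$, $D^2_{pp}H(x,p)$ is positive definite for all $(x,p)$, and for every $K>0$ there is $C(K)\in\mathbb{R}$ with $H(x,p)\ge K|p|+C(K)$. $L(x,v)=\sup_{p}\{p\cdot v-H(x,p)\}$ is its Legendre transform (so $L$ is $C^2$, strictly convex in $v$, and superlinear: for every $K>0$ there is $C(K)$ with $L(x,v)\ge K|v|+C(K)$). For $\tau>0$ set $\mathcal L_\tau(x,y):=\tau L\bigl(x,\frac{y-x}{\tau}\bigr)$. It is known that for each $\tau>0$ there is a unique constant $\bar L(\tau)\in\mathbb{R}$ for which the discrete Lax--Oleinik equation above has a continuous periodic solution $u_\tau$, that such solutions are Lipschitz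 with a constant independent of $\tau$, and that $\bar L(\tau)\to-\alpha(H)$ as $\tau\to0$, where $\alpha(H)$ is the unique constant such that $H(x,Du)=\alpha(H)$ has a viscosity solution on $\mathbb{T}^d$. A calibrated (backward) configuration for $u_\tau$ (through $x$) is a sequence $\{x_{-k}\}_{k\ge0}$ with $x_0=x$ and $u_\tau(x_{-k})+\tau\bar L(\tau)=u_\tau(x_{-k-1})+\mathcal L_\tau(x_{-k-1},x_{-k})$ for all $k\ge0$. *)

From HB Require Import structures.
From mathcomp Require Import all_boot all_order all_algebra.
From mathcomp Require Import all_classical all_reals all_analysis.
Set Implicit Arguments. Unset Strict Implicit. Unset Printing Implicit Defensive.
Import Order.TTheory GRing.Theory Num.Theory.
Import numFieldNormedType.Exports.
Local Open Scope classical_set_scope.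
Local Open Scope ring_scope.

Section Defs.
Variables (R : realType) (d : nat).
Notation V := 'rV[R]_d.

Definition dotR (p v : V) : R := \sum_(i < d) p 0 i * v 0 i.
Definition enorm (v : V) : R := Num.sqrt (dotR v v).

(* Z^d-periodicity in the space variable (functions on T^d). *)
Definition Zperiodic (u : V -> R) : Prop :=
  forall (x : V) (k : 'rV[int]_d), u (x + map_mx (fun z : int => z%:~R) k) = u x.

Definition C2 (f : V * V -> R) : Prop :=
  continuous f /\
  (forall (v : V * V) z, derivable f z v) /\
  (forall v : V * V, continuous ('D_v f)) /\
  (forall (v w : V * V) z, derivable ('D_v f) z w) /\
  (forall v w : V * V, continuous ('D_w ('D_v f))).

Definition uncurryH (H : V -> V -> R) : V * V -> R := fun z => H z.1 z.2.

Definition evec (i : 'I_d) : V := \row_(j < d) (i == j)%:R.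

Definition Hess_pp (H : V -> V -> R) (x p : V) : 'M[R]_d :=
  \matrix_(i < d, j < d)
    ('D_((0 : V), evec j) ('D_((0 : V), evec i) (uncurryH H))) (x, p).

Definition posdef (M : 'M[R]_d) : Prop :=
  forall w : V, w != 0 -> 0 < (w *m M *m w^T) 0 0.

Definition tonelli (H : V -> V -> R) : Prop :=
  [/\ (forall x p (k : 'rV[int]_d),
         H (x + map_mx (fun z : int => z%:~R) k) p = H x p),
      C2 (uncurryH H),
      (forall x p, posdef (Hess_pp H x p)) &
      (forall K : R, 0 < K -> exists C : R, forall x p, K * enorm p + C <= H x p)].

Definition lagrangian (H : V -> V -> R) (x v : V) : R :=
  sup [set dotR p v - H x p | p in [set: V]].

Definition Ltau (H : V -> V -> R) (tau : R) (x y : V) : R :=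
  tau * lagrangian H x (tau^-1 *: (y - x)).

Definition discrete_LO (H : V -> V -> R) (tau c : R) (u : V -> R) : Prop :=
  forall y : V, u y + c * tau = inf [set u x + Ltau H tau x y | x in [set: V]].

(* Calibrated backward configuration: X k stands for x_{-k}. *)
Definition calibrated (H : V -> V -> R) (tau c : R) (u : V -> R) (X : nat -> V) : Prop :=
  forall k : nat, u (X k) + tau * c = u (X k.+1) + Ltau H tau (X k.+1) (X k).

End Defs.

From HB Require Import structures.
From mathcomp Require Import all_boot all_order all_algebra.
From mathcomp Require Import all_classical all_reals all_analysis.
From mathcomp Require Import lra ring.
Import Order.TTheory GRing.Theory Num.Theory.
Import numFieldNormedType.Exports.
Local Open Scope classical_set_scope.
Local Open Scope ring_scope.

(* Superlinearity of H bounds the Lagrangian above on the unit ball, L <= Lambda,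
   and gives L(x, v) >= K |v| - M_K for every slope K (test the supremum at
   p = K v / |v|; H is bounded on T^d x {|p| <= K} by periodicity and continuity).
   Taking x = y in the Lax-Oleinik equation gives c <= L(x, 0) <= Lambda, and
   comparing with inf u gives c >= inf L.  A calibrated jump of velocity v costs
   tau L(x, v) = u(y) - u(x) + tau c, while the same displacement made in
   N = floor |v| + 1 jumps of velocity v / N costs at most N tau (Lambda - c); so
   L(x, v) <= Lambda + |v| (Lambda - c), and a slope K > Lambda - inf L bounds |v|
   uniformly in tau, c and u. *)

Section EuclideanNorm.
Context {R : realType} {d : nat}.
Implicit Types (p v : 'rV[R]_d).

Lemma dotRC p v : dotR p v = dotR v p.
Proof. by apply: eq_bigr => i _; rewrite mulrC. Qed.

Lemma dotRZl (a : R) p v : dotR (a *: p) v = a * dotR p v.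
Proof. by rewrite /dotR mulr_sumr; apply: eq_bigr => i _; rewrite mxE mulrA. Qed.

Lemma dotR0l v : dotR 0 v = 0.
Proof. by rewrite -(scale0r 0) dotRZl mul0r. Qed.

Lemma dotR_ge0 v : 0 <= dotR v v.
Proof. by apply: sumr_ge0 => i _; rewrite -expr2 sqr_ge0. Qed.

Lemma enorm_ge0 v : 0 <= enorm v.
Proof. exact: sqrtr_ge0. Qed.

Lemma enorm0 : enorm (0 : 'rV[R]_d) = 0.
Proof. by rewrite /enorm dotR0l sqrtr0. Qed.

Lemma enorm_sqr v : enorm v ^+ 2 = dotR v v.
Proof. by rewrite sqr_sqrtr // dotR_ge0. Qed.

Lemma enorm_eq0 v : enorm v = 0 -> v = 0.
Proof.
move=> v0; have /psumr_eq0P vv0 : dotR v v = 0 by rewrite -enorm_sqr v0 expr0n.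
apply/rowP => i; rewrite mxE.
have := vv0 (fun j _ => sqr_ge0 (v 0 j)) i isT.
by move/eqP; rewrite -expr2 sqrf_eq0 => /eqP.
Qed.

Lemma enormZ (a : R) v : enorm (a *: v) = `|a| * enorm v.
Proof.
by rewrite /enorm dotRZl dotRC dotRZl mulrA -expr2 sqrtrM ?sqr_ge0 // sqrtr_sqr.
Qed.

Lemma dotR_le_enorm p v : dotR p v <= enorm p * enorm v.
Proof.
have [p0|p0] := eqVneq (enorm p) 0; first by rewrite (enorm_eq0 _ p0) dotR0l enorm0 mul0r.
have [v0|v0] := eqVneq (enorm v) 0.
  by rewrite (enorm_eq0 _ v0) dotRC dotR0l enorm0 mulr0.
set a := enorm p; set b := enorm v.
have ab_gt0 : 0 < a * b by rewrite mulr_gt0 // lt0r ?p0 ?v0 enorm_ge0.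
have : 0 <= \sum_i (b * p 0 i - a * v 0 i) ^+ 2 by apply: sumr_ge0 => i _; apply: sqr_ge0.
have -> : \sum_i (b * p 0 i - a * v 0 i) ^+ 2 = 2 * (a * b) * (a * b - dotR p v).
  have -> : 2 * (a * b) * (a * b - dotR p v) =
            b ^+ 2 * dotR p p - 2 * a * b * dotR p v + a ^+ 2 * dotR v v.
    by rewrite -!enorm_sqr -/a -/b; ring.
  rewrite /dotR !mulr_sumr -sumrB -big_split /=; apply: eq_bigr => i _; ring.
by rewrite pmulr_rge0 ?subr_ge0 // mulr_gt0.
Qed.

Lemma normr_coord_le_enorm v i : `|v 0 i| <= enorm v.
Proof.
rewrite -(ler_pXn2r (n := 2)) ?nnegrE ?enorm_ge0 // real_normK ?num_real //.
rewrite enorm_sqr /dotR (bigD1 i) //= expr2 lerDl.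
by apply: sumr_ge0 => j _; apply: sqr_ge0.
Qed.

End EuclideanNorm.

Section PeriodicBounds.
Context {R : realType} {d : nat}.
Local Notation intr_mx k := (map_mx (fun z : int => z%:~R) k).

Definition cube (a b : R) : set 'rV[R]_d := [set v | forall i, v 0 i \in `[a, b]].

Lemma cube_compact a b : compact (cube a b).
Proof. by apply: (@rV_compact _ _ (fun=> `[a, b]%classic)) => _; apply: segment_compact. Qed.

Lemma int_shift_in_unit_cube (x : 'rV[R]_d) :
  exists k : 'rV[int]_d, cube 0 1 (x + intr_mx k).
Proof.
exists (\row_i (- Num.floor (x 0 i))) => i.
rewrite !mxE in_itv /= rmorphN /= subr_ge0 floor_le /= lerBlDl.
by have := floorD1_gt (x 0 i); rewrite intrD => /ltW.
Qed.

Lemma continuous_compact_bounded {T : topologicalType} {f : T -> R} {A : set T} :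
  continuous f -> compact A -> exists M, forall x, A x -> `|f x| <= M.
Proof.
move=> f_cont A_compact.
have [M [_ M_ub]] := compact_bounded (continuous_compact (continuous_subspaceT f_cont) A_compact).
by exists (M + 1) => x Ax; apply: M_ub (ltr_pwDr ltr01 (lexx M)) _ (ex_intro2 _ _ x Ax erefl).
Qed.

Lemma Zperiodic_continuous_bounded {u : 'rV[R]_d -> R} :
  continuous u -> Zperiodic u -> exists B, forall x, `|u x| <= B.
Proof.
move=> u_cont u_per; have [B B_ub] := continuous_compact_bounded u_cont (cube_compact 0 1).
by exists B => x; have [k k_cube] := int_shift_in_unit_cube x; rewrite -(u_per x k) B_ub.
Qed.

Lemma tonelli_bounded_on_balls {H : 'rV[R]_d -> 'rV[R]_d -> R} (K : R) :
  tonelli H -> exists M, forall x p, enorm p <= K -> H x p <= M.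
Proof.
case=> H_per [H_cont _] _ _.
have [M M_ub] := continuous_compact_bounded H_cont
  (compact_setX (cube_compact 0 1) (cube_compact (- K) K)).
exists M => x p p_le; have [k k_cube] := int_shift_in_unit_cube x.
rewrite -(H_per x p k); apply: le_trans (ler_norm _) (M_ub (_, p) _); split => //= i.
by rewrite in_itv /= -ler_norml (le_trans (normr_coord_le_enorm _ _)).
Qed.

End PeriodicBounds.

Definition superlinear {R : realType} {d : nat} (H : 'rV[R]_d -> 'rV[R]_d -> R) : Prop :=
  forall K : R, 0 < K -> exists C : R, forall x p, K * enorm p + C <= H x p.

Section Lagrangian.
Context {R : realType} {d : nat} {H : 'rV[R]_d -> 'rV[R]_d -> R}.

Lemma tonelli_superlinear : tonelli H -> superlinear H.
Proof. by case. Qed.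

Section Growth.
Context {K C : R}.
Hypothesis H_ge : forall x p, K * enorm p + C <= H x p.

Lemma legendre_term_le x v p : enorm v <= K -> dotR p v - H x p <= - C.
Proof.
move=> v_le; have := dotR_le_enorm p v; have := H_ge x p.
have : enorm p * enorm v <= enorm p * K by rewrite ler_wpM2l ?enorm_ge0.
lra.
Qed.

Lemma lagrangian_le x v : enorm v <= K -> lagrangian H x v <= - C.
Proof.
move=> v_le; apply: ge_sup; first by exists (dotR 0 v - H x 0), 0.
by move=> _ [p _ <-]; apply: legendre_term_le.
Qed.

End Growth.

Lemma lagrangian_ge : superlinear H -> forall x v p, dotR p v - H x p <= lagrangian H x v.
Proof.
move=> H_sl x v p; have [C H_ge] := H_sl (enorm v + 1) (ltr_pwDr ltr01 (enorm_ge0 v)).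
apply: sup_upper_bound; last by exists p.
split; first by exists (dotR p v - H x p), p.
by exists (- C) => _ [q _ <-]; apply: (legendre_term_le H_ge); rewrite lerDl.
Qed.

Lemma lagrangian_superlinear (K : R) :
  tonelli H -> exists M, forall x v, K * enorm v - M <= lagrangian H x v.
Proof.
move=> H_ton; have [M H_le] := tonelli_bounded_on_balls `|K| H_ton.
(* For v = 0 the witness is p = 0, as K / 0 = 0. *)
exists M => x v; set e := enorm v; set p := (K / e) *: v.
have p_le : enorm p <= `|K|.
  rewrite enormZ normrM normfV (ger0_norm (enorm_ge0 v)) -mulrA -/e.
  by have [->|e_neq0] := eqVneq e 0; rewrite ?mulr0 // mulVf ?mulr1.
have pv : dotR p v = K * e.
  rewrite dotRZl -enorm_sqr -/e expr2 mulrA.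
  by have [->|e_neq0] := eqVneq e 0; rewrite ?mulr0 // divfK.
apply: le_trans (lagrangian_ge (tonelli_superlinear H_ton) x v p).
by rewrite pv lerB // H_le.
Qed.

End Lagrangian.

Section DiscreteLaxOleinik.
Context {R : realType} {d : nat} {H : 'rV[R]_d -> 'rV[R]_d -> R} {tau c : R} {u : 'rV[R]_d -> R}.
Hypotheses (tau_gt0 : 0 < tau) (u_LO : discrete_LO H tau c u).
Context {B m Lambda : R}.
Hypotheses (u_ge : forall x, - B <= u x) (L_ge : forall x v, m <= lagrangian H x v).
Hypothesis L_le : forall x w, enorm w <= 1 -> lagrangian H x w <= Lambda.

Lemma discrete_LO_le x y : u y + c * tau <= u x + Ltau H tau x y.
Proof.
rewrite u_LO; apply: ge_inf; last by exists x.
exists (- B + tau * m) => _ [z _ <-].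
by apply: lerD; [exact: u_ge | rewrite /Ltau ler_pM2l].
Qed.

Lemma discrete_LO_const_le x : c <= lagrangian H x 0.
Proof.
have := discrete_LO_le x x; rewrite /Ltau subrr scaler0 lerD2l mulrC.
by rewrite ler_pM2l.
Qed.

Lemma discrete_LO_const_ge : m <= c.
Proof.
set U := [set u x | x in [set: 'rV[R]_d]].
have U_lb : has_lbound U by exists (- B) => _ [x _ <-]; apply: u_ge.
have inf_le : inf U + tau * (m - c) <= inf U.
  apply: lb_le_inf; first by exists (u 0), 0.
  move=> _ [y _ <-]; rewrite mulrBr addrA lerBlDr -(mulrC c) u_LO.
  apply: lb_le_inf; first by exists (u y + Ltau H tau y y), y.
  move=> _ [x _ <-]; apply: lerD; first by apply: ge_inf; last by exists x.
  by rewrite /Ltau ler_pM2l.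
by move: inf_le; rewrite gerDl pmulr_rle0 // subr_le0.
Qed.

Lemma discrete_LO_chain x w n :
  enorm w <= 1 -> u (x + (n%:R * tau) *: w) <= u x + n%:R * tau * (Lambda - c).
Proof.
move=> w_le; elim: n => [|n IH]; first by rewrite mulr0n !mul0r scale0r !addr0.
set y := x + (n%:R * tau) *: w.
have -> : x + (n.+1%:R * tau) *: w = y + tau *: w.
  by rewrite /y -addrA -scalerDl mulrSr mulrDl mul1r.
have step : u (y + tau *: w) + c * tau <= u y + tau * Lambda.
  apply: le_trans (discrete_LO_le y (y + tau *: w)) _.
  rewrite lerD2l /Ltau addrAC subrr add0r scalerA mulVf ?gt_eqF // scale1r ler_pM2l //.
  exact: L_le.
rewrite mulrSr mulrDl mul1r; move: IH step; lra.
Qed.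

Lemma calibrated_step_lagrangian_le x y :
  u y + tau * c = u x + Ltau H tau x y ->
  lagrangian H x (tau^-1 *: (y - x)) <= Lambda + enorm (tau^-1 *: (y - x)) * (Lambda - c).
Proof.
rewrite /Ltau; set v := tau^-1 *: (y - x); set e := enorm v => cal.
have gap_ge0 : 0 <= Lambda - c.
  by rewrite subr_ge0 (le_trans (discrete_LO_const_le x)) // L_le // enorm0 ler01.
have /andP[e_ge e_lt] := truncn_itv (enorm_ge0 v); rewrite -/e in e_ge e_lt.
set N := (Num.truncn e).+1; have N_gt0 : 0 < N%:R :> R by [].
have N_le : N%:R <= e + 1 by rewrite /N -addn1 natrD lerD2r.
have w_le : enorm (N%:R^-1 *: v) <= 1.
  by rewrite enormZ ger0_norm ?invr_ge0 ?ler0n // mulrC ler_pdivrMr // mul1r ltW.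
have := discrete_LO_chain x _ N w_le.
have -> : x + (N%:R * tau) *: (N%:R^-1 *: v) = y.
  by rewrite scalerA mulrAC mulfV ?gt_eqF // mul1r /v scalerA mulfV ?gt_eqF // scale1r addrC subrK.
move=> chain.
have : tau * lagrangian H x v <= tau * (c + N%:R * (Lambda - c)) by lra.
rewrite ler_pM2l // => /le_trans; apply.
have := ler_wpM2r gap_ge0 N_le; lra.
Qed.

End DiscreteLaxOleinik.

Theorem lemma3p4 (R : realType) (d : nat) (H : 'rV[R]_d -> 'rV[R]_d -> R) :
  tonelli H ->
  exists D : R, 0 < D /\
    forall (tau c : R) (u : 'rV[R]_d -> R) (X : nat -> 'rV[R]_d),
      0 < tau ->
      continuous u -> Zperiodic u ->
      discrete_LO H tau c u ->
      calibrated H tau c u X ->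
      forall k : nat, enorm (tau^-1 *: (X k - X k.+1)) <= D.
Proof.
move=> H_ton; have [C H_ge] := tonelli_superlinear H_ton 1 ltr01.
have L_le x w : enorm w <= 1 -> lagrangian H x w <= - C := lagrangian_le H_ge x w.
have [M1 L_ge1] := lagrangian_superlinear 1 H_ton.
have L_ge x v : - M1 <= lagrangian H x v.
  by apply: le_trans (L_ge1 x v); rewrite mul1r lerDr enorm_ge0.
have [M L_ge2] := lagrangian_superlinear (`|M1 - C| + 1) H_ton.
exists (`|M - C| + 1); split => [|tau c u X tau_gt0 u_cont u_per u_LO u_cal k].
  by rewrite ltr_pwDr ?normr_ge0.
have [B u_bounded] := Zperiodic_continuous_bounded u_cont u_per.
have u_ge x : - B <= u x by have := u_bounded x; rewrite ler_norml => /andP[].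
have c_ge := discrete_LO_const_ge tau_gt0 u_LO u_ge L_ge.
have L_v_le := calibrated_step_lagrangian_le tau_gt0 u_LO u_ge L_ge L_le _ _ (u_cal k).
set v := tau^-1 *: (X k - X k.+1) in L_v_le *.
have gap_le : enorm v * (- C - c) <= enorm v * `|M1 - C|.
  by apply: (ler_wpM2l (enorm_ge0 v)); apply: le_trans (ler_norm _); lra.
have := L_ge2 (X k.+1) v; have := ler_norm (M - C); lra.
Qed.
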